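(* Suppose $\mathcal U$ is quasiconvex and strongly stable with parameters $a,b,q$, and let $L=b\bigl(1+\max_{i,j\in\mathbb K}\|F^{(i)}-F^{(j)}\|^{q-1}\bigr)$. Then for every admissible policy $\pi$ and every $T\ge1$, $$\tilde{\mathcal R}(\pi,T)\le\frac{L}{T}\sum_{i\ne i^*}\mathbb E[\tau_i(T)]\,\|F^{(i^* )}-F^{(i)}\|.$$
   Context: Bandit setting: $K\ge1$, $\mathbb K=\{1,\dots,K\}$; arm $i$ produces i.i.d. rewards $X^{(i)}_1,X^{(i)}_2,\dots$ with distribution function $F^{(i)}$, all rewards mutually independent. An admissible policy $\pi=(\pi_1,\pi_2,\dots)$ chooses $\pi_t\in\mathbb K$ as a measurable function of an independent randomization variable $V$ and past actions/rewards; $\tau_i(t)=\sum_{s\le t}\mathbf 1\{\pi_s=i\}$, and the reward at time $t$ is $X^\pi_t=X^{(i)}_{\tau_i(t)}$ on $\{\pi_t=i\}$. Empirical distribution functions: $\hat F_t(x_1,\dots,x_t;y)=\frac1t\sum_{s\le t}\mathbf 1\{x_s\le y\}$, $\hat F^{(i)}_t=\hat F_t(X^{(i)}_1,\dots,X^{(i)}_t;\cdot)$; $\hat{\mathcal D}$ is the set of all empirical distribution functions of finite real sequences. $\Delta_{K-1}$ is the probability simplex in $\mathbb R^K$, $F_p=\sum_ip_iF^{(i)}$, $\mathcal D^\Delta=\{F_p:p\in\Delta_{K-1}\}$. $(L,\|\cdot\|)$ is a Banach space of bounded functions on $\mathbb R$ containing $\mathcal D^\Delta\cup\hat{\mathcal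 D}$, and $\mathcal U:L\to\mathbb R$. $\mathcal U$ is quasiconvex if $\mathcal U(\lambda F+(1-\lambda)G)\le\max\{\mathcal U(F),\mathcal U(G)\}$. $\mathcal U$ is strongly stable if (1) there exist $b>0,q\ge1$ with $|\mathcal U(F)-\mathcal U(G)|\le b(\|F-G\|+\|F-G\|^q)$ for all $F\in\mathcal D^\Delta$, $G\in\mathcal D^\Delta\cup\hat{\mathcal D}$, and (2) there is $a>0$ with $\mathbb P(\|\hat F^{(i)}_t-F^{(i)}\|\ge x)\le2\exp(-atx^2)$ for all $i\in\mathbb K$, $x>0$, $t\ge1$. Let $p^*\in\arg\max_{p\in\Delta_{K-1}}\mathcal U(F_p)$, $\Delta_i=\mathcal U(F_{p^*})-\mathcal U(F^{(i)})$ and $i^*\in\arg\min_{i}\Delta_i$. The proxy distribution is $\tilde F^\pi_T=\frac1T\sum_{i=1}^K\tau_i(T)F^{(i)}$ and the proxy regret is $\tilde{\mathcal R}(\pi,T)=\mathbb E[\mathcal U(F_{p^*})-\mathcal U(\tilde F^\pi_T)]$. *)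

From HB Require Import structures.
From mathcomp Require Import all_boot all_order all_algebra.
From mathcomp Require Import all_classical all_reals all_analysis.
Set Implicit Arguments. Unset Strict Implicit. Unset Printing Implicit Defensive.
Import Order.TTheory GRing.Theory Num.Theory.
Local Open Scope classical_set_scope.
Local Open Scope ring_scope.

Definition fsub (R : realType) (f g : R -> R) : R -> R := fun y => f y - g y.

Definition bounded_fun (R : realType) (f : R -> R) : Prop :=
  exists M : R, forall y, `|f y| <= M.

Definition banach_fun_space (R : realType) (L : set (R -> R))
    (N : (R -> R) -> R) : Prop :=
  [/\ L (fun _ => 0),
      (forall f g, L f -> L g -> L (fun y => f y + g y)),
      (forall (c : R) f, L f -> L (fun y => c * f y)),
      (forall f, L f -> bounded_fun f) &
   [/\ (forall f, L f -> 0 <= N f),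
       (forall f, L f -> N f = 0 -> f = (fun _ => 0)),
       (forall (c : R) f, L f -> N (fun y => c * f y) = `|c| * N f),
       (forall f g, L f -> L g -> N (fun y => f y + g y) <= N f + N g) &
       (forall u : nat -> (R -> R), (forall n, L (u n)) ->
          (forall e : R, 0 < e -> exists n0 : nat, forall m n : nat,
              (n0 <= m)%N -> (n0 <= n)%N -> N (fsub (u m) (u n)) < e) ->
          exists f, L f /\ forall e : R, 0 < e -> exists n0 : nat,
              forall n : nat, (n0 <= n)%N -> N (fsub (u n) f) < e)]].

Definition in_simplex (R : realType) (K : nat) (p : 'I_K -> R) : Prop :=
  (forall i, 0 <= p i) /\ \sum_(i < K) p i = 1.

Definition Fmix (R : realType) (K : nat) (F : 'I_K -> R -> R) (p : 'I_K -> R)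
  : R -> R := fun y => \sum_(i < K) p i * F i y.

Definition DDelta (R : realType) (K : nat) (F : 'I_K -> R -> R) (G : R -> R)
  : Prop := exists p, in_simplex p /\ G = Fmix F p.

Definition emp (R : realType) (xs : seq R) : R -> R :=
  fun y => (size xs)%:R^-1 * \sum_(x <- xs) (if x <= y then 1 else 0).

Definition Dhat (R : realType) (G : R -> R) : Prop :=
  exists xs : seq R, xs != [::] /\ G = emp xs.

Definition quasiconvex (R : realType) (L : set (R -> R)) (U : (R -> R) -> R)
  : Prop :=
  forall F G (lam : R), L F -> L G -> 0 <= lam <= 1 ->
    U (fun y => lam * F y + (1 - lam) * G y) <= Num.max (U F) (U G).

(* strong stability with parameters a, b, q.
   Rewards: X i s is the (s+1)-th reward X^(i)_(s+1) of arm i. *)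
Definition strongly_stable (R : realType) (d : measure_display)
    (Omega : measurableType d) (P : probability Omega R) (K : nat)
    (X : 'I_K -> nat -> Omega -> R) (F : 'I_K -> R -> R)
    (N : (R -> R) -> R) (U : (R -> R) -> R) (a b q : R) : Prop :=
  [/\ 0 < b, 1 <= q, 0 < a,
    (forall F' G, DDelta F F' -> DDelta F G \/ Dhat G ->
        `|U F' - U G| <= b * (N (fsub F' G) + N (fsub F' G) `^ q)) &
    (forall (i : 'I_K) (x : R) (t : nat), 0 < x -> (1 <= t)%N ->
        (P [set w | (x <= N (fsub (emp [seq X i s w | s <- iota 0 t]) (F i)))%R]
          <= (2 * expR (- (a * t%:R * x ^+ 2)))%R%:E)%E)].

Definition mutually_independent (R : realType) (d : measure_display)
    (Omega : measurableType d) (P : probability Omega R) (I : eqType)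
    (Y : I -> Omega -> R) : Prop :=
  forall (J : seq I) (B : I -> set R), uniq J ->
    (forall j, measurable (B j)) ->
    P (\big[setI/setT]_(j <- J) (Y j @^-1` B j))
      = (\prod_(j <- J) P (Y j @^-1` B j))%E.

Definition VX_family (R : realType) (Omega : Type) (K : nat)
    (V : Omega -> R) (X : 'I_K -> nat -> Omega -> R)
    (j : option ('I_K * nat)) : Omega -> R :=
  match j with None => V | Some (i, s) => X i s end.

(* times are 0-based: pi t is the action at time t+1.
   tau pi i t = number of pulls of arm i during the first t rounds *)
Definition tau (Omega : Type) (K : nat) (pi : nat -> Omega -> 'I_K)
    (i : 'I_K) (t : nat) (w : Omega) : nat :=
  \sum_(s < t) (pi s w == i).

Definition Xpi (R : realType) (Omega : Type) (K : nat)
    (X : 'I_K -> nat -> Omega -> R) (pi : nat -> Omega -> 'I_K) (t : nat)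
    (w : Omega) : R :=
  X (pi t w) (tau pi (pi t w) t w) w.

Definition past_gen (R : realType) (d : measure_display)
    (Omega : measurableType d) (K : nat) (V : Omega -> R)
    (X : 'I_K -> nat -> Omega -> R) (pi : nat -> Omega -> 'I_K) (t : nat)
  : set (set Omega) :=
  [set A | (exists B : set R, measurable B /\ A = V @^-1` B)
        \/ (exists s, (s < t)%N /\ exists B : set 'I_K, A = pi s @^-1` B)
        \/ (exists s, (s < t)%N /\ exists B : set R,
                measurable B /\ A = Xpi X pi s @^-1` B)].

(* admissible policy: each action is a measurable function of V and of the
   past actions and rewards, i.e. it is measurable w.r.t. the generated
   sigma-algebra *)
Definition admissible (R : realType) (d : measure_display)
    (Omega : measurableType d) (K : nat) (V : Omega -> R)
    (X : 'I_K -> nat -> Omega -> R) (pi : nat -> Omega -> 'I_K) : Prop :=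
  forall (t : nat) (i : 'I_K), <<s past_gen V X pi t >> (pi t @^-1` [set i]).

Definition Ftilde (R : realType) (Omega : Type) (K : nat)
    (F : 'I_K -> R -> R) (pi : nat -> Omega -> 'I_K) (T : nat) (w : Omega)
  : R -> R := Fmix F (fun i => (tau pi i T w)%:R / T%:R).

From HB Require Import structures.
From mathcomp Require Import all_boot all_order all_algebra.
From mathcomp Require Import all_classical all_reals all_analysis.
From mathcomp Require Import measurable_realfun ring lra.
Set Implicit Arguments. Unset Strict Implicit. Unset Printing Implicit Defensive.
Import Order.TTheory GRing.Theory Num.Theory.
Local Open Scope classical_set_scope.
Local Open Scope ring_scope.

(* By quasiconvexity, U on the mixtures F_p is bounded by its
   largest value at a vertex, which is U(F^(i* )). Hence, for every outcome,
   0 <= U(F_p* ) - U(~F) <= U(F^(i* )) - U(~F) <= b (D + D^q) by stability,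
   where D = ||F^(i* ) - ~F||. As ~F is the mixture with weights tau_i(T)/T,
   the triangle inequality gives D <= (1/T) sum_i tau_i(T) ||F^(i* ) - F^(i)||,
   and D^(q-1) is at most the largest (q-1)-th power of a distance between
   arms. The bound thus holds pathwise, and integrating it only needs the pull
   counts to be measurable, which follows from admissibility. *)
Section FunctionSpace.
Variables (R : realType) (Lsp : set (R -> R)) (N : (R -> R) -> R).
Hypothesis BS : banach_fun_space Lsp N.

Lemma fun_space0 : Lsp (fun _ => 0).
Proof. by case: BS. Qed.

Lemma fun_spaceD f g : Lsp f -> Lsp g -> Lsp (fun y => f y + g y).
Proof. by case: BS => _ + _ _ _; apply. Qed.

Lemma fun_spaceZ c f : Lsp f -> Lsp (fun y => c * f y).
Proof. by case: BS => _ _ + _ _; apply. Qed.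

Lemma fun_space_sub f g : Lsp f -> Lsp g -> Lsp (fsub f g).
Proof.
move=> Lf Lg; have := fun_spaceD Lf (fun_spaceZ (-1) Lg).
by congr Lsp; apply/funext => y; rewrite /fsub mulN1r.
Qed.

Lemma norm_fun_ge0 f : Lsp f -> 0 <= N f.
Proof. by case: BS => _ _ _ _ [+ _ _ _ _]; apply. Qed.

Lemma norm_funZ c f : Lsp f -> N (fun y => c * f y) = `|c| * N f.
Proof. by case: BS => _ _ _ _ [_ _ + _ _]; apply. Qed.

Lemma norm_funD f g : Lsp f -> Lsp g -> N (fun y => f y + g y) <= N f + N g.
Proof. by case: BS => _ _ _ _ [_ _ _ + _]; apply. Qed.

Lemma norm_fun0 : N (fun _ => 0) = 0.
Proof. by have := norm_funZ 0 fun_space0; rewrite normr0 !mul0r. Qed.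

Variables (I : Type) (c : I -> R) (f : I -> R -> R).
Hypothesis Lf : forall i, Lsp (f i).

Lemma fun_space_lincomb r : Lsp (fun y => \sum_(i <- r) c i * f i y).
Proof.
elim: r => [|a r IH].
  by under eq_fun do rewrite big_nil; exact: fun_space0.
under eq_fun do rewrite big_cons.
exact: fun_spaceD (fun_spaceZ _ (Lf a)) IH.
Qed.

Lemma norm_lincomb_le r :
  N (fun y => \sum_(i <- r) c i * f i y) <= \sum_(i <- r) `|c i| * N (f i).
Proof.
elim: r => [|a r IH].
  by under eq_fun do rewrite big_nil; rewrite big_nil norm_fun0.
under eq_fun do rewrite big_cons.
rewrite big_cons; apply: le_trans (norm_funD (fun_spaceZ _ (Lf a))
  (fun_space_lincomb r)) _.
by rewrite norm_funZ // lerD2l.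
Qed.

End FunctionSpace.

Section Simplex.
Variables (R : realType) (K : nat).
Implicit Types (p : 'I_K -> R) (F : 'I_K -> R -> R).

Lemma in_simplex_le1 p j : in_simplex p -> p j <= 1.
Proof.
case=> p0 <-; rewrite (bigD1 j) //= lerDl.
by apply: sumr_ge0 => i _; exact: p0.
Qed.

Lemma in_simplex_delta j : in_simplex (fun i : 'I_K => (i == j)%:R : R).
Proof.
split=> [i|]; first by rewrite ler0n.
by rewrite (bigD1 j) //= eqxx big1 ?addr0 // => i /negbTE ->.
Qed.

Lemma Fmix_delta F j : Fmix F (fun i => (i == j)%:R) = F j.
Proof.
apply/funext => y; rewrite /Fmix (bigD1 j) //= eqxx mul1r big1 ?addr0 //.
by move=> i /negbTE ->; rewrite mul0r.
Qed.

Lemma DDelta_vertex F j : DDelta F (F j).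
Proof.
exists (fun i => (i == j)%:R); rewrite Fmix_delta; split=> //.
exact: in_simplex_delta.
Qed.

Lemma Fmix_vertex F p j : in_simplex p -> p j = 1 -> Fmix F p = F j.
Proof.
case=> p0 p1 pj1; have : \sum_(i | i != j) p i = 0.
  by move: p1; rewrite (bigD1 j) //= pj1; lra.
move=> /psumr_eq0P p_eq0; apply/funext => y.
rewrite /Fmix (bigD1 j) //= pj1 mul1r big1 ?addr0 // => i ij.
by rewrite p_eq0 ?mul0r // => k _; exact: p0.
Qed.

Definition simplex_remove p j : 'I_K -> R :=
  fun i => if i == j then 0 else p i / (1 - p j).

Lemma in_simplex_remove p j : in_simplex p -> p j != 1 ->
  in_simplex (simplex_remove p j).
Proof.
move=> sp pj1; have [p0 p1] := sp; have pj_le1 := in_simplex_le1 j sp.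
have pj_lt1 : 0 < 1 - p j by rewrite subr_gt0 lt_neqAle pj1.
split=> [i|].
  by rewrite /simplex_remove; case: eqP => // _; rewrite divr_ge0 // ltW.
rewrite (bigD1 j) //= /simplex_remove eqxx add0r.
rewrite (eq_bigr (fun i => p i / (1 - p j))); last by move=> i /negbTE ->.
rewrite -mulr_suml; have -> : \sum_(i | i != j) p i = 1 - p j.
  by move: p1; rewrite (bigD1 j) //= => <-; rewrite addrC addrK.
by rewrite divff // gt_eqF.
Qed.

Lemma Fmix_remove F p j : p j != 1 ->
  Fmix F p = fun y => p j * F j y + (1 - p j) * Fmix F (simplex_remove p j) y.
Proof.
move=> pj1; have pj1' : 1 - p j != 0 by rewrite subr_eq0 eq_sym.
apply/funext => y; rewrite /Fmix (bigD1 j) //= mulr_sumr [in RHS](bigD1 j) //=.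
rewrite /simplex_remove eqxx mul0r mulr0 add0r; congr (_ + _).
by apply: eq_bigr => i /negbTE ->; field.
Qed.

End Simplex.

Lemma quasiconvex_Fmix_le (R : realType) (K : nat) (F : 'I_K -> R -> R)
    (Lsp : set (R -> R)) (U : (R -> R) -> R) (M : R) :
  (forall G, DDelta F G -> Lsp G) -> quasiconvex Lsp U ->
  (forall i, U (F i) <= M) ->
  forall p, in_simplex p -> U (Fmix F p) <= M.
Proof.
move=> LD qc UM.
(* Induction on a bound n for the support of p: splitting off the vertex n - 1
   by quasiconvexity leaves a point of the simplex with smaller support. *)
suff H n p : in_simplex p -> (forall i : 'I_K, (n <= i)%N -> p i = 0) ->
    U (Fmix F p) <= M.
  by move=> p sp; apply: (H K) => // i; rewrite leqNgt ltn_ord.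
elim: n p => [|n IH] p sp supp.
  case: sp => _; rewrite big1 => [/eqP|i _]; last exact: supp.
  by rewrite eq_sym oner_eq0.
have [Kn|nK] := leqP K n.
  by apply: IH => // i ni; have := ltn_ord i; rewrite ltnNge (leq_trans Kn ni).
pose j := Ordinal nK.
have [pj1|pj1] := eqVneq (p j) 1; first by rewrite (Fmix_vertex F sp pj1).
have sp' := in_simplex_remove sp pj1.
rewrite (Fmix_remove F pj1).
have pj01 : 0 <= p j <= 1 by rewrite (in_simplex_le1 j sp) andbT; case: sp.
apply: le_trans (qc _ _ _ (LD _ (DDelta_vertex F j))
  (LD _ (ex_intro _ _ (conj sp' erefl))) pj01) _.
rewrite ge_max UM IH // => i ni; rewrite /simplex_remove.
case: eqP => // /eqP ij; rewrite supp ?mul0r //.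
by rewrite ltn_neqAle ni andbT; apply: contra ij => /eqP ni'; apply/eqP/val_inj.
Qed.

Lemma exists_ge_convex_comb (R : realType) (K : nat) (p x : 'I_K -> R) :
  in_simplex p -> exists j, \sum_i p i * x i <= x j.
Proof.
case: K p x => [|K] p x [p0 p1].
  by move: p1; rewrite big_ord0 => /eqP; rewrite eq_sym oner_eq0.
exists [arg max_(j > ord0) x j]%O; case: arg_maxP => // j _ jmax.
rewrite -[x j]mul1r -p1 mulr_suml; apply: ler_sum => i _.
by apply: ler_wpM2l; [exact: p0 | exact: jmax].
Qed.

Lemma add_powR_le (R : realType) (q D S M : R) : 1 <= q -> 0 <= D -> D <= S ->
  D `^ (q - 1) <= M -> D + D `^ q <= S * (1 + M).
Proof.
move=> q1 D0 DS DM.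
have -> : D `^ q = D * D `^ (q - 1).
  rewrite -[in LHS](subrK 1 q) (@powRD _ D (q - 1) 1) ?powRr1 1?mulrC //.
  by rewrite subrK gt_eqF // (lt_le_trans ltr01 q1).
by rewrite mulrDr mulr1 lerD // ler_pM // powR_ge0.
Qed.

Section ProxyGap.
Variables (R : realType) (K : nat) (F : 'I_K -> R -> R).
Variables (Lsp : set (R -> R)) (N U : (R -> R) -> R) (b q : R).
Variables (pstar : 'I_K -> R) (istar : 'I_K).
Hypothesis BS : banach_fun_space Lsp N.
Hypothesis LDelta : forall G, DDelta F G -> Lsp G.
Hypothesis qc : quasiconvex Lsp U.
Hypotheses (b0 : 0 < b) (q1 : 1 <= q).
Hypothesis stable : forall F' G, DDelta F F' -> DDelta F G ->
  `|U F' - U G| <= b * (N (fsub F' G) + N (fsub F' G) `^ q).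
Hypothesis pstar_simplex : in_simplex pstar.
Hypothesis pstar_max :
  forall p, in_simplex p -> U (Fmix F p) <= U (Fmix F pstar).
Hypothesis istar_min : forall i,
  U (Fmix F pstar) - U (F istar) <= U (Fmix F pstar) - U (F i).

Lemma fun_space_sub_vertex i j : Lsp (fsub (F i) (F j)).
Proof.
exact: (fun_space_sub BS (LDelta (DDelta_vertex F i))
  (LDelta (DDelta_vertex F j))).
Qed.

Lemma norm_sub_Fmix_le j c : in_simplex c ->
  N (fsub (F j) (Fmix F c)) <= \sum_i c i * N (fsub (F j) (F i)).
Proof.
case=> c0 c1.
have -> : fsub (F j) (Fmix F c) =
    fun y => \sum_(i <- index_enum 'I_K) c i * fsub (F j) (F i) y.
  apply/funext => y; rewrite /fsub /Fmix.
  by under [RHS]eq_bigr do rewrite mulrBr; rewrite sumrB -mulr_suml c1 mul1r.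
apply: le_trans (norm_lincomb_le BS c (fun_space_sub_vertex j) _) _.
by apply: ler_sum => i _; rewrite ger0_norm.
Qed.

Lemma proxy_gap_le c : in_simplex c ->
  0 <= U (Fmix F pstar) - U (Fmix F c) <=
  b * (1 + \big[Num.max/0]_(i < K) \big[Num.max/0]_(j < K)
                        (N (fsub (F i) (F j)) `^ (q - 1))) *
  \sum_(i < K | i != istar) c i * N (fsub (F istar) (F i)).
Proof.
move=> sc; rewrite subr_ge0 pstar_max //=.
have Dc : DDelta F (Fmix F c) by exists c.
have U_istar : U (Fmix F pstar) <= U (F istar).
  apply: quasiconvex_Fmix_le LDelta qc _ _ pstar_simplex => i.
  by have := istar_min i; lra.
set D := N (fsub (F istar) (Fmix F c)).
have D_le_sum := norm_sub_Fmix_le istar sc.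
have D0 : 0 <= D.
  exact: (norm_fun_ge0 BS (fun_space_sub BS (LDelta (DDelta_vertex F istar))
    (LDelta Dc))).
have D_le_S : D <= \sum_(i | i != istar) c i * N (fsub (F istar) (F i)).
  have N_istar : N (fsub (F istar) (F istar)) = 0.
    by rewrite -(norm_fun0 BS); congr N; apply/funext => y; rewrite /fsub subrr.
  by move: D_le_sum; rewrite (bigD1 istar) //= N_istar mulr0 add0r.
have D_le_Mx : D `^ (q - 1) <= \big[Num.max/0]_(i < K) \big[Num.max/0]_(j < K)
                        (N (fsub (F i) (F j)) `^ (q - 1)).
  have [j Dj] := exists_ge_convex_comb (fun i => N (fsub (F istar) (F i))) sc.
  apply: le_trans (_ : N (fsub (F istar) (F j)) `^ (q - 1) <= _).
    apply: ge0_ler_powR; rewrite ?nnegrE ?subr_ge0 //; last exact: le_trans Dj.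
    exact: (norm_fun_ge0 BS (fun_space_sub_vertex _ _)).
  apply: le_trans (le_bigmax _ (fun i => \big[Num.max/0]_(j < K)
                        (N (fsub (F i) (F j)) `^ (q - 1))) istar).
  exact: le_bigmax.
apply: le_trans (_ : `|U (F istar) - U (Fmix F c)| <= _).
  by apply: le_trans (ler_norm _); lra.
apply: le_trans (stable (DDelta_vertex F istar) Dc) _.
by rewrite -mulrA ler_pM2l // mulrC add_powR_le.
Qed.

End ProxyGap.

Section Policy.
Variables (R : realType) (d : measure_display) (Omega : measurableType d).
Variables (K : nat) (pi : nat -> Omega -> 'I_K).

Lemma sum_tau t w : (\sum_(i < K) tau pi i t w)%N = t.
Proof.
rewrite /tau exchange_big /= -[RHS]card_ord -sum1_card; apply: eq_bigr => s _.
rewrite (bigD1 (pi s w)) //= eqxx big1 ?addn0 // => i /negbTE.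
by rewrite eq_sym => ->.
Qed.

Lemma in_simplex_tau T w : (0 < T)%N ->
  in_simplex (fun i => (tau pi i T w)%:R / T%:R : R).
Proof.
move=> T0; split=> [i|]; first by rewrite divr_ge0 ?ler0n.
by rewrite -mulr_suml -natr_sum sum_tau divff // pnatr_eq0 -lt0n.
Qed.

Lemma measurable_tau i t :
  (forall s, (s < t)%N -> forall j, measurable (pi s @^-1` [set j])) ->
  measurable_fun setT (fun w => (tau pi i t w)%:R : R).
Proof.
move=> mpi.
have -> : (fun w => (tau pi i t w)%:R : R) =
    (fun w => \sum_(s < t) \1_(pi s @^-1` [set i]) w).
  apply/funext => w; rewrite /tau natr_sum; apply: eq_bigr => s _.
  rewrite indicE; suff -> : (w \in pi s @^-1` [set i]) = (pi s w == i) by [].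
  by apply/idP/eqP; rewrite inE.
apply: measurable_sum => s; exact/measurable_indic/mpi.
Qed.

Variables (X : 'I_K -> nat -> Omega -> R) (V : Omega -> R).
Hypotheses (mX : forall i s, measurable_fun setT (X i s)).
Hypothesis mV : measurable_fun setT V.

Lemma past_gen_measurable t :
  (forall s, (s < t)%N -> forall j, measurable (pi s @^-1` [set j])) ->
  past_gen V X pi t `<=` measurable.
Proof.
move=> mpi A [[B [mB ->]] | [[s [st [B ->]]] | [s [st [B [mB ->]]]]]].
- by rewrite -[_ @^-1` _]setTI; exact: mV.
- have -> : pi s @^-1` B = \bigcup_(j in B) pi s @^-1` [set j].
    by apply/seteqP; split=> [w Bw|w [j Bj /= ->]] //; exists (pi s w).
  apply: fin_bigcup_measurable; first exact: finite_finset.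
  by move=> j _; exact: mpi.
- have -> : Xpi X pi s @^-1` B = \bigcup_(j in setT) \bigcup_n
      (pi s @^-1` [set j] `&` [set w | tau pi j s w = n] `&` X j n @^-1` B).
    apply/seteqP; split=> [w /= Bw|w [j _ [n _ [[/= piw tauw] Bw]]]].
      by exists (pi s w) => //; exists (tau pi (pi s w) s w).
    by rewrite /Xpi piw tauw.
  apply: fin_bigcup_measurable; first exact: finite_finset.
  move=> j _; apply: bigcupT_measurable => n.
  apply: measurableI; first apply: measurableI.
  + exact: mpi.
  + have := measurable_tau j (fun r rs => mpi r (ltn_trans rs st)) measurableT
      (measurable_set1 (n%:R : R)).
    rewrite setTI; congr measurable; apply/seteqP; split=> w /= => [/eqP|->//].
    by rewrite eqr_nat => /eqP.
  + by rewrite -[_ @^-1` _]setTI; exact: mX.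
Qed.

Lemma admissible_measurable_action : admissible V X pi ->
  forall t i, measurable (pi t @^-1` [set i]).
Proof.
move=> adm t; elim/ltn_ind: t => t IH i.
exact: (smallest_sub (@sigma_algebra_measurable d Omega)
  (past_gen_measurable IH) (adm t i)).
Qed.

End Policy.

Section NonnegIntegral.
Local Open Scope ereal_scope.
Variables (R : realType) (d : measure_display) (T : measurableType d).
Variable mu : {measure set T -> \bar R}.

(* No measurability is needed: the integral of a nonnegative function is the
   supremum of the integrals of the simple functions below it. *)
Lemma ge0_le_integralT (f g : T -> \bar R) :
  (forall x, 0 <= f x) -> (forall x, f x <= g x) ->
  \int[mu]_x f x <= \int[mu]_x g x.
Proof.
move=> f0 fg; rewrite !ge0_integralTE // => [|x]; last exact: le_trans (fg x).
apply: ereal_sup_le => _ [h hf <-]; exists h => //= x.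
exact: le_trans (hf x) (fg x).
Qed.

Lemma ge0_integral_lincomb (I : Type) (r : seq I) (P : pred I)
    (g : I -> T -> R) (c : I -> R) (k : R) :
  (forall i, measurable_fun setT (g i)) -> (forall i x, (0 <= g i x)%R) ->
  (forall i, (0 <= c i)%R) -> (0 <= k)%R ->
  \int[mu]_x (k * \sum_(i <- r | P i) g i x * c i)%:E =
  k%:E * \sum_(i <- r | P i) (\int[mu]_x (g i x)%:E) * (c i)%:E.
Proof.
move=> mg g0 c0 k0.
pose gc i x := if P i then (g i x * c i)%:E else 0.
have mgc i : measurable_fun setT (gc i).
  rewrite /gc; case: (P i); last exact: measurable_cst.
  by apply/measurable_EFinP; apply: measurable_funM => //; exact: measurable_cst.
have gc0 i x : 0 <= gc i x by rewrite /gc; case: (P i); rewrite // lee_fin mulr_ge0.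
under eq_integral do rewrite EFinM -sumEFin big_mkcond.
rewrite ge0_integralZl //; last 2 first.
- exact: emeasurable_sum.
- by move=> x _; apply: sume_ge0 => i _; exact: gc0.
rewrite ge0_integral_sum //; last by move=> i x _; exact: gc0.
rewrite [in RHS]big_mkcond; congr (_ * _); apply: eq_bigr => i _.
case: (P i); last by rewrite integral0.
under eq_integral do rewrite EFinM.
rewrite ge0_integralZr ?lee_fin //; first exact/measurable_EFinP.
by move=> x _; rewrite lee_fin.
Qed.

End NonnegIntegral.

Theorem lemma6 (R : realType) (d : measure_display) (Omega : measurableType d)
    (P : probability Omega R) (K : nat)
    (X : 'I_K -> nat -> Omega -> R) (V : Omega -> R) (F : 'I_K -> R -> R)
    (Lsp : set (R -> R)) (N : (R -> R) -> R) (U : (R -> R) -> R)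
    (a b q : R) (pstar : 'I_K -> R) (istar : 'I_K)
    (pi : nat -> Omega -> 'I_K) (T : nat) :
  (0 < K)%N ->
  (* rewards and randomization variable are real random variables *)
  (forall i s, measurable_fun setT (X i s)) ->
  measurable_fun setT V ->
  (* X^(i)_1, X^(i)_2, ... have distribution function F^(i) *)
  (forall i s y, P [set w | X i s w <= y] = (F i y)%:E) ->
  (* V and all the rewards are mutually independent *)
  mutually_independent P (VX_family V X) ->
  (* (Lsp, N) is a Banach space of bounded functions containing D^Delta u hat D *)
  banach_fun_space Lsp N ->
  (forall G, DDelta F G \/ Dhat G -> Lsp G) ->
  quasiconvex Lsp U ->
  strongly_stable P X F N U a b q ->
  (* p* maximizes p |-> U(F_p) over the simplex *)
  in_simplex pstar ->
  (forall p, in_simplex p -> U (Fmix F p) <= U (Fmix F pstar)) ->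
  (* i* minimizes Delta_i = U(F_p* ) - U(F^(i)) *)
  (forall i, U (Fmix F pstar) - U (F istar) <= U (Fmix F pstar) - U (F i)) ->
  admissible V X pi ->
  (1 <= T)%N ->
  let Lc := b * (1 + \big[Num.max/0]_(i < K) \big[Num.max/0]_(j < K)
                        (N (fsub (F i) (F j)) `^ (q - 1))) in
  (\int[P]_w (U (Fmix F pstar) - U (Ftilde F pi T w))%:E
    <= (Lc / T%:R)%:E *
       \sum_(i < K | i != istar)
          (\int[P]_w ((tau pi i T w)%:R : R)%:E) * (N (fsub (F istar) (F i)))%:E)%E.
Proof.
move=> _ mX mV _ _ BS LDhat qc [b0 q1 _ stable _] sps pstar_max istar_min adm T1.
cbv zeta; set Lc := b * (1 + _).
have LDelta G : DDelta F G -> Lsp G by move=> ?; apply: LDhat; left.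
have stable' F' G : DDelta F F' -> DDelta F G ->
    `|U F' - U G| <= b * (N (fsub F' G) + N (fsub F' G) `^ q).
  by move=> ? ?; apply: stable => //; left.
have gap_tau w : 0 <= U (Fmix F pstar) - U (Ftilde F pi T w) <=
    Lc / T%:R * \sum_(i < K | i != istar)
      (tau pi i T w)%:R * N (fsub (F istar) (F i)).
  rewrite (_ : Lc / T%:R * _ = Lc * \sum_(i < K | i != istar)
      (tau pi i T w)%:R / T%:R * N (fsub (F istar) (F i))).
    exact: (proxy_gap_le BS LDelta qc b0 q1 stable' sps pstar_max istar_min
      (in_simplex_tau R pi w T1)).
  by rewrite !mulr_sumr; apply: eq_bigr => i _; ring.
apply: le_trans (ge0_le_integralT P (g := fun w => (Lc / T%:R *
    \sum_(i < K | i != istar) (tau pi i T w)%:R * N (fsub (F istar) (F i)))%:E)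
  _ _) _.
- by move=> w; rewrite lee_fin; case/andP: (gap_tau w).
- by move=> w; rewrite lee_fin; case/andP: (gap_tau w).
rewrite ge0_integral_lincomb //.
- move=> i; apply: measurable_tau => s _.
  exact: admissible_measurable_action mX mV adm s.
- by move=> i; exact: (norm_fun_ge0 BS (fun_space_sub_vertex BS LDelta _ _)).
- rewrite divr_ge0 // mulr_ge0 //; first exact: ltW.
  by rewrite addr_ge0 // bigmax_ge_id.
Qed.
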